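(* Let $y$ be a Lyndon word of length $n\ge 1$ over a totally ordered alphabet. Algorithm LeftLyndonTree (described in the context) applied to $y$ returns the root of a binary tree which is exactly the left Lyndon tree $\mathrm{LLT}(y)$ (with leaves $0,1,\dots,n-1$ in left-to-right order), and it runs in time $O(n)$, accessing letters of $y$ only through comparisons between letters.
   Context: Words are finite sequences $y=y[0]\cdots y[n-1]$ over a totally ordered alphabet. Lexicographic order $<$: $u<v$ if $u$ is a proper prefix of $v$, or $u=ras$, $v=rbt$ with $a<b$ letters. A Lyndon word is a non-empty word strictly smaller than each of its proper non-empty suffixes. Left Lyndon tree $\mathrm{LLT}(y)$ of a Lyndon word $y$: if $|y|=1$ it is a single leaf; otherwise $y=uv$ with $u$ the longest proper Lyndon prefix of $y$ (then $v$ is Lyndon), and $\mathrm{LLT}(y)$ has left subtree $\mathrm{LLT}(u)$ and right subtree $\mathrm{LLT}(v)$. Leaves, read left to right, are identified with positions $0,\dots,n-1$. Algorithm LeftLyndonTree (input: Lyndon word $y$ of length $n$; arrays lyns, root; internal nodes are fresh identifiers $\ge n$ with left/right child pointers): lyns[0] ← 1; root[0] ← 0; per ← 1; i ← 0. For j = 1 to n−1: root[j] ← j; if y[j] ≠ y[i] then { lyns[j] ← j+1; per ← j+1; i ← 0 } else { lyns[j] ← lyns[i]; i ← (i+1) mod per }; ℓ ← 1; k ← j−1; while ℓ < lyns[j]: { create a new internal node q with left child root[k] and right child root[j]; root[j] ← q; ℓ ← ℓ + lyns[k]; k ← k − lyns[k] }. Return root[n−1]. *)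

From mathcomp Require Import all_boot all_order.
Set Implicit Arguments. Unset Strict Implicit. Unset Printing Implicit Defensive.
Import Order.TTheory.

Section Words.
Context {d : Order.disp_t} {T : orderType d}.

Fixpoint lex_lt (u v : seq T) : bool :=
  match u, v with
  | [::], [::] => false
  | [::], _ :: _ => true
  | _ :: _, [::] => false
  | a :: u', b :: v' => ((a < b)%O) || ((a == b) && lex_lt u' v')
  end.

Definition lyndon (y : seq T) : Prop :=
  y != [::] /\ forall k, 0 < k < size y -> lex_lt y (drop k y).

End Words.

Inductive btree := Leaf of nat | Node of btree & btree.

(* is_llt y off t : t is the left Lyndon tree LLT(y) of the Lyndon word y,
   its leaves being numbered off, off+1, ..., off + |y| - 1 from left to right. *)
Inductive is_llt {d : Order.disp_t} {T : orderType d} :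
    seq T -> nat -> btree -> Prop :=
| llt_leaf (a : T) off : is_llt [:: a] off (Leaf off)
| llt_node (y : seq T) off m tl tr :
    1 < size y ->
    0 < m < size y ->
    lyndon (take m y) ->
    (forall m', m < m' < size y -> ~ lyndon (take m' y)) ->
    is_llt (take m y) off tl ->
    is_llt (drop m y) (off + m) tr ->
    is_llt y off (Node tl tr).

(** The algorithm accesses the word only through the letter-comparison oracle
   [neq i j] (= "y[i] <> y[j]").  Arrays are functions nat -> nat; internal nodes
   get fresh identifiers >= n with pointer arrays [lft], [rgt].  [cost] counts
   elementary steps (one per for-iteration, one per while-iteration, one for
   initialisation).  [ok] becomes false if the while-loop fuel is exhausted. *)

Record state := State {
  lyns : nat -> nat;
  root : nat -> nat;
  per : nat;
  ii : nat;
  lft : nat -> nat;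
  rgt : nat -> nat;
  fresh : nat;
  cost : nat;
  ok : bool }.

Definition upd (f : nat -> nat) (a v : nat) : nat -> nat :=
  fun x => if x == a then v else f x.

Fixpoint wloop (fuel j l k : nat) (s : state) : state :=
  match fuel with
  | 0 => State (lyns s) (root s) (per s) (ii s) (lft s) (rgt s) (fresh s) (cost s) false
  | fuel'.+1 =>
    if l < lyns s j then
      let q := fresh s in
      let s' := State (lyns s) (upd (root s) j q) (per s) (ii s)
                      (upd (lft s) q (root s k)) (upd (rgt s) q (root s j))
                      q.+1 (cost s).+1 (ok s) in
      wloop fuel' j (l + lyns s k) (k - lyns s k) s'
    else s
  end.

Definition for_body (neq : nat -> nat -> bool) (n : nat) (s : state) (j : nat)
  : state :=
  let rt := upd (root s) j j in
  let s1 :=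
    if neq j (ii s) then
      State (upd (lyns s) j j.+1) rt j.+1 0 (lft s) (rgt s) (fresh s)
            (cost s).+1 (ok s)
    else
      State (upd (lyns s) j (lyns s (ii s))) rt (per s) ((ii s).+1 %% per s)
            (lft s) (rgt s) (fresh s) (cost s).+1 (ok s) in
  wloop n.+1 j 1 j.-1 s1.

Definition init_state (n : nat) : state :=
  State (fun _ => 1) (fun _ => 0) 1 0 (fun _ => 0) (fun _ => 0) n 1 true.

Definition run_llt (neq : nat -> nat -> bool) (n : nat) : state :=
  foldl (for_body neq n) (init_state n) (iota 1 n.-1).

Fixpoint decode (n : nat) (lf rg : nat -> nat) (fuel id : nat) : option btree :=
  if id < n then Some (Leaf id) else
  match fuel with
  | 0 => None
  | fuel'.+1 =>
    match decode n lf rg fuel' (lf id), decode n lf rg fuel' (rg id) with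
    | Some tl, Some tr => Some (Node tl tr)
    | _, _ => None
    end
  end.

Definition letter_neq {d : Order.disp_t} {T : orderType d} (y : seq T) (x0 : T)
  (i j : nat) : bool := nth x0 y i != nth x0 y j.

Definition llt_output (neq : nat -> nat -> bool) (n : nat) : option btree :=
  let s := run_llt neq n in
  if ok s then decode n (lft s) (rgt s) (fresh s) (root s n.-1) else None.

From Pilot Require Import Defs.
From mathcomp Require Import all_boot all_order.
From mathcomp Require Import zify.
Set Implicit Arguments. Unset Strict Implicit. Unset Printing Implicit Defensive.
Import Order.TTheory.

(* Write lyns[k] for the length of the longest Lyndon suffix of y[0..k].  The
   for-loop maintains, after position j, that lyns[k] is correct and root[k]
   represents the left Lyndon tree of y[k+1-lyns[k]..k], for every k <= j.
   - lyns[j+1] is computed from a period: y[0..j] has period p = per, the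
     length of a Lyndon prefix, and i = (j+1) mod p.  If y[j+1] = y[i], the
     period extends and y[0..j+1] has the same longest Lyndon suffix as
     y[0..i] (Section PeriodicPrefix); otherwise y[j+1] > y[i] because y is
     Lyndon, and y[0..j+1] itself is Lyndon.
   - root[j+1] is built by the while-loop, which starts from the leaf j+1 and
     repeatedly glues to the left the longest Lyndon suffix u of the prefix
     before the current Lyndon factor v; uv is Lyndon and u is its longest
     proper Lyndon prefix (Section Merge), so the glued trees are left Lyndon
     trees, until v is the longest Lyndon suffix of y[0..j+1].
   - The cost plus the number of factors of the Lyndon factorization of
     y[0..j] is always 2(j+1): a for-iteration adds a factor, each
     while-iteration merges two.
   As y is Lyndon, its longest Lyndon suffix is y, whence the theorem. *)

Section Lex.
Context {d : Order.disp_t} {T : orderType d}.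
Implicit Types u v w : seq T.

Lemma lex_lt_irr u : ~~ lex_lt u u.
Proof. by elim: u => [|a u IH] //=; rewrite ltxx eqxx. Qed.

Lemma lex_lt_trans u v w : lex_lt u v -> lex_lt v w -> lex_lt u w.
Proof.
elim: u v w => [|a u IH] [|b v] [|c w] //=.
case/orP=> [ab|/andP[/eqP-> uv]]; case/orP=> [bc|/andP[/eqP<- vw]].
- by rewrite (lt_trans ab bc).
- by rewrite ab.
- by rewrite bc.
- by rewrite eqxx (IH _ _ uv vw) orbT.
Qed.

Lemma lex_lt_asym u v : lex_lt u v -> ~~ lex_lt v u.
Proof.
by move=> uv; apply/negP=> vu; move: (lex_lt_irr u); rewrite (lex_lt_trans uv vu).
Qed.

Lemma lex_lt_total u v : u != v -> lex_lt u v \/ lex_lt v u.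
Proof.
elim: u v => [|a u IH] [|b v] //=; [by left|by right|].
move=> neq_av; case: (ltgtP a b) => [ab|ba|eab]; [by left|by right|].
subst b; rewrite ?eqxx /=; have : u != v by apply: contraNneq neq_av => ->.
by case/IH => ->; [left|right].
Qed.

Lemma lex_lt_catl p u v : lex_lt (p ++ u) (p ++ v) = lex_lt u v.
Proof. by elim: p => [|a p IH] //=; rewrite ltxx eqxx IH. Qed.

Lemma lex_lt_prefix u w : w != [::] -> lex_lt u (u ++ w).
Proof.
elim: u => [|a u IH] /=; first by case: w.
by move=> /IH ->; rewrite eqxx orbT.
Qed.

Definition lex_le u v := lex_lt u v \/ u = v.

Lemma lex_le_lt_trans u v w : lex_le u v -> lex_lt v w -> lex_lt u w.
Proof. by case=> [uv|->] //; apply: lex_lt_trans. Qed.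

Lemma lex_le_trans u v w : lex_le u v -> lex_le v w -> lex_le u w.
Proof. by case=> [uv|->] // [vw|<-]; left => //; apply: lex_lt_trans uv vw. Qed.

Lemma lex_leNlt u v : ~~ lex_lt u v -> lex_le v u.
Proof.
move=> nuv; case: (eqVneq u v) => [->|/lex_lt_total [uv|vu]]; [by right| |by left].
by rewrite uv in nuv.
Qed.

Variable x0 : T.

Definition first_diff u v k := [/\ k < size u, k < size v,
  (forall i, i < k -> nth x0 u i = nth x0 v i) & (nth x0 u k < nth x0 v k)%O].

Lemma first_diff_lt u v k : first_diff u v k -> lex_lt u v.
Proof.
elim: u v k => [|a u IH] [|b v] [|k] [] //=; first by move=> _ _ _ ->.
move=> ku kv same lt_k; have /= ab := same 0 erefl; subst b.
rewrite eqxx /=; apply/orP; right.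
by apply: (IH v k); split => // i ik; apply: (same i.+1).
Qed.

Lemma first_diff_cat u v s t k : first_diff u v k -> first_diff (u ++ s) (v ++ t) k.
Proof.
case=> ku kv same lt_k; split; rewrite ?size_cat ?nth_cat ?ku ?kv //; try lia.
by move=> i ik; rewrite !nth_cat (ltn_trans ik ku) (ltn_trans ik kv); apply: same.
Qed.

Lemma lex_ltP u v : lex_lt u v ->
  (exists2 w, w != [::] & v = u ++ w) \/ exists k, first_diff u v k.
Proof.
elim: u v => [|a u IH] [|b v] //=; first by move=> _; left; exists (b :: v).
case/orP=> [ab|/andP[/eqP<- /IH [[w wn ->]|[k [ku kv same lt_k]]]]].
- by right; exists 0; split.
- by left; exists w.
- by right; exists k.+1; split => // -[].
Qed.

Lemma lex_lt_first_diff u v : lex_lt u v -> size v <= size u ->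
  exists k, first_diff u v k.
Proof. by case/lex_ltP => // -[w wn ->]; rewrite size_cat; case: w wn => //= *; lia. Qed.

End Lex.

Lemma lex_lt_cat {d : Order.disp_t} {T : orderType d} (u v s t : seq T) :
  lex_lt u v -> size v <= size u -> lex_lt (u ++ s) (v ++ t).
Proof.
case: u => [|a u]; first by case: v.
by move=> uv /(lex_lt_first_diff a uv) [k /first_diff_cat k_st]; apply: first_diff_lt (k_st s t).
Qed.

Section Lyndon.
Context {d : Order.disp_t} {T : orderType d}.
Implicit Types u v w x o t z : seq T.

Lemma neq0_size (s : seq T) : (s != [::]) = (0 < size s).
Proof. by case: s. Qed.

Lemma lyndon_neq0 u : lyndon u -> u != [::].
Proof. by case. Qed.

Lemma lyndon_lt_drop u k : lyndon u -> 0 < k < size u -> lex_lt u (drop k u).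
Proof. by case=> _; apply. Qed.

Lemma lyndon_drop_not_lt u k : lyndon u -> 0 < k < size u -> ~~ lex_lt (drop k u) u.
Proof. by move=> lu k_in; apply: lex_lt_asym (lyndon_lt_drop lu k_in). Qed.

Lemma lyndon_unbordered u k : lyndon u -> 0 < k < size u ->
  drop k u != take (size u - k) u.
Proof.
move=> lu k_in; apply: contraNneq (lyndon_drop_not_lt lu k_in) => ->.
rewrite -[X in lex_lt _ X](cat_take_drop (size u - k)); apply: lex_lt_prefix.
by rewrite neq0_size size_drop; lia.
Qed.

Lemma lyndon_size1 u : size u = 1 -> lyndon u.
Proof. by case: u => [|a [|]] //= _; split => // -[|k]. Qed.

Lemma lyndon_cat u v : lyndon u -> lyndon v -> lex_lt u v -> lyndon (u ++ v).
Proof.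
move=> lu lv uv; have un := lyndon_neq0 lu; have vn := lyndon_neq0 lv.
have uv_lt_v : lex_lt (u ++ v) v.
  have [a0 _] : exists a : T, True by case: u un {lu uv} => // a *; exists a.
  case/(lex_ltP a0): uv => [[w wn ev]|[k diff_k]].
  - rewrite {2}ev lex_lt_catl; have -> : w = drop (size u) v by rewrite ev drop_size_cat.
    apply: lyndon_lt_drop => //; rewrite ev size_cat.
    by move: un wn; rewrite !neq0_size; lia.
  - by rewrite -{2}(cats0 v); apply: first_diff_lt (first_diff_cat v [::] diff_k).
split; first by case: (u) un.
move=> k /andP[k0]; rewrite size_cat => kl; rewrite drop_cat.
case: ltnP => ku.
  apply: lex_lt_cat; last by rewrite size_drop leq_subr.
  by apply: lyndon_lt_drop => //; rewrite k0.
case: (eqVneq k (size u)) => [->|kn]; first by rewrite subnn drop0.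
by apply: lex_lt_trans uv_lt_v _; apply: lyndon_lt_drop => //; lia.
Qed.

Lemma lyndon_overlap x o t : x != [::] -> o != [::] -> t != [::] ->
  lyndon (x ++ o) -> lyndon (o ++ t) -> lyndon (x ++ o ++ t).
Proof.
move=> xn on tn lxo lot; move: (xn) (on); rewrite !neq0_size => x0 o0.
have xot_lt_ot : lex_lt (x ++ o ++ t) (o ++ t).
  rewrite catA; apply: lex_lt_cat; last by rewrite size_cat leq_addl.
  have x_in : 0 < size x < size (x ++ o) by rewrite size_cat; lia.
  by have := lyndon_lt_drop lxo x_in; rewrite drop_size_cat.
split; first by case: (x) xn.
move=> k /andP[k0]; rewrite !size_cat => kl; rewrite drop_cat.
case: ltnP => kx.
  rewrite !catA; apply: lex_lt_cat; last by rewrite !size_cat size_drop; lia.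
  have -> : drop k x ++ o = drop k (x ++ o) by rewrite drop_cat kx.
  by apply: lyndon_lt_drop => //; rewrite size_cat k0; lia.
case: (eqVneq k (size x)) => [->|kn]; first by rewrite subnn drop0.
by apply: lex_lt_trans xot_lt_ot _; apply: lyndon_lt_drop => //; rewrite size_cat; lia.
Qed.

Definition lyndonb u := (u != [::]) && all (fun k => lex_lt u (drop k u)) (iota 1 (size u).-1).

Lemma lyndonP u : reflect (lyndon u) (lyndonb u).
Proof.
apply: (iffP andP) => [[un /allP lt_drop]|[un lt_drop]]; split => //.
  by move=> k k_in; apply: lt_drop; rewrite mem_iota; case: (size u) k_in => //= *; lia.
by apply/allP => k; rewrite mem_iota => k_in; apply: lt_drop; case: (size u) k_in => //= *; lia.
Qed.

Definition longest_lyndon_suffix z m := [/\ 0 < m, m <= size z,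
  lyndon (drop (size z - m) z) &
  forall m', m < m' <= size z -> ~ lyndon (drop (size z - m') z)].

Lemma longest_lyndon_suffix_exists z : z != [::] -> exists m, longest_lyndon_suffix z m.
Proof.
move=> zn; pose P m := [&& 0 < m, m <= size z & lyndonb (drop (size z - m) z)].
have P1 : P 1.
  rewrite /P -neq0_size zn /=; apply/lyndonP/lyndon_size1.
  by move: zn; rewrite size_drop neq0_size; lia.
have exP : exists m, P m by exists 1.
have P_le : forall m, P m -> m <= size z by move=> m /and3P[].
exists (ex_maxn exP P_le); case: ex_maxnP => m /and3P[m0 mz /lyndonP lm] m_max.
split => // m' /andP[mm' m'z] lm'.
have : m' <= m by apply: m_max; rewrite /P m'z; apply/and3P; split => //; [lia|apply/lyndonP].
lia.
Qed.

(* The longest Lyndon suffix of z is lexicographically at most z: peeling off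
   longest Lyndon suffixes yields a non-increasing sequence of Lyndon words. *)
Lemma longest_lyndon_suffix_le z m : longest_lyndon_suffix z m ->
  lex_le (drop (size z - m) z) z.
Proof.
move: {2}(size z) (leqnn (size z)) => N; elim: N z m => [|N IH] z m.
  by rewrite leqn0 => /eqP/size0nil -> [] /= m0 m00; lia.
move=> zN [m0 mz lu u_max].
set x := take (size z - m) z; set u := drop (size z - m) z.
have zxu : z = x ++ u by rewrite cat_take_drop.
have sx : size x = size z - m by rewrite size_take; case: ltnP; lia.
case: (eqVneq (size z - m) 0) => [e0|xn0]; first by right; rewrite /u e0 drop0.
have xn : x != [::] by rewrite neq0_size sx; lia.
have [m1 lls_x] := longest_lyndon_suffix_exists xn.
have u'_le_x := IH x m1 ltac:(lia) lls_x.
case: lls_x => [m10 m1x lu' _]; set u' := drop (size x - m1) x in u'_le_x lu' *.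
have u_le_u' : lex_le u u'.
  apply: lex_leNlt; apply/negP => u'_lt_u; apply: (u_max (m + m1)); first by lia.
  have -> : size z - (m + m1) = size x - m1 by lia.
  by rewrite {1}zxu drop_cat ifT; [apply: lyndon_cat|lia].
have x_lt_z : lex_lt x z.
  rewrite [in X in lex_lt _ X]zxu; apply: lex_lt_prefix.
  by rewrite neq0_size size_drop; lia.
by left; apply: lex_le_lt_trans x_lt_z; apply: lex_le_trans u_le_u' u'_le_x.
Qed.

End Lyndon.

Lemma modnD_mod0 a b p : a %% p = 0 -> (b + a) %% p = b %% p.
Proof. by move=> a0; rewrite -modnDmr a0 addn0. Qed.

Lemma modnB_mod0 t N p : t <= N -> t %% p = 0 -> (N - t) %% p = N %% p.
Proof. by move=> tN t0; rewrite -{2}(subnK tN) modnD_mod0. Qed.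

Lemma modn_subn_mod N p : (N - N %% p) %% p = 0.
Proof. by rewrite {1}(divn_eq N p) addnK modnMl. Qed.

Lemma modn_le_subn N p : 0 < p -> p <= N -> N %% p <= N - p.
Proof.
move=> p0 pN; have -> : N = (N - p) + p by lia.
by rewrite modnDr; apply: leq_trans (leq_mod _ _) _; lia.
Qed.

(* Prefixes of a Lyndon word y that are periodic with the period p of a Lyndon
   prefix of y.  These facts justify the first half of each for-iteration of
   the algorithm: how lyns[j] is obtained from the period and the counter i. *)
Section PeriodicPrefix.
Context {d : Order.disp_t} {T : orderType d}.
Variables (y : seq T) (x0 : T) (p N : nat).
Hypotheses (p_gt0 : 0 < p) (p_le_N : p <= N) (N_lt_n : N < size y).
Local Notation Y i := (nth x0 y i).
Local Notation z := (take N.+1 y).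

Lemma size_prefix : size z = N.+1.
Proof. by rewrite size_takel. Qed.

Lemma nth_prefix i : i <= N -> nth x0 z i = Y i.
Proof. by move=> iN; rewrite nth_take. Qed.

Lemma nth_drop_prefix t i : t + i <= N -> nth x0 (drop t z) i = Y (t + i).
Proof. by move=> tiN; rewrite nth_drop nth_take. Qed.

Lemma size_period : size (take p y) = p.
Proof. by rewrite size_takel //; lia. Qed.

Lemma nth_period i : i < p -> nth x0 (take p y) i = Y i.
Proof. by move=> ip; rewrite nth_take. Qed.

Lemma period_first_diff e : lyndon (take p y) -> 0 < e < p -> exists dd,
  [/\ e + dd < p, forall i, i < dd -> Y i = Y (e + i) & (Y dd < Y (e + dd))%O].
Proof.
move=> lw e_in; have [dd [ddw dde same lt_dd]] : exists dd,
    first_diff x0 (take p y) (drop e (take p y)) dd.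
  apply: lex_lt_first_diff; last by rewrite size_drop leq_subr.
  by apply: lyndon_lt_drop; rewrite ?size_period.
rewrite size_drop size_period in dde; exists dd; split; first by lia.
  by move=> i idd; move: (same i idd); rewrite nth_drop !nth_period //; lia.
by move: lt_dd; rewrite nth_drop !nth_period //; lia.
Qed.

Section Bump.
Hypothesis per_below : forall x, x < N -> Y x = Y (x %% p).

Lemma per_below_shift a b : a < N -> b < N -> a %% p = b %% p -> Y a = Y b.
Proof. by move=> aN bN ab; rewrite (per_below aN) (per_below bN) ab. Qed.

Lemma bump_gt : lyndon y -> Y N != Y (N %% p) -> (Y (N %% p) < Y N)%O.
Proof.
move=> ly neq_N; case: (ltgtP (Y N) (Y (N %% p))) => [lt_N|//|eq_N]; last first.
  by rewrite eq_N eqxx in neq_N.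
have r_lt_p : N %% p < p by rewrite ltn_pmod.
have := modn_le_subn p_gt0 p_le_N; set t := N - N %% p => r_le.
have t_in : 0 < t < size y by rewrite /t; lia.
have/negP[] := lyndon_drop_not_lt ly t_in.
apply: (@first_diff_lt _ _ x0 _ _ (N %% p)); split.
- by rewrite size_drop /t; lia.
- by lia.
- move=> i ir; rewrite nth_drop; apply: per_below_shift; try lia.
  by rewrite addnC modnD_mod0 ?modn_subn_mod.
- by rewrite nth_drop (_ : t + N %% p = N) // /t; lia.
Qed.

Hypothesis bump : (Y (N %% p) < Y N)%O.

(* ... and then the prefix y[0..N] becomes Lyndon.  Its suffixes starting at a
   multiple of p first differ from it at the bumped letter, *)
Lemma bump_drop_aligned t : 0 < t <= N -> t %% p = 0 -> lex_lt z (drop t z).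
Proof.
move=> t_in t0; apply: (@first_diff_lt _ _ x0 _ _ (N - t)); split.
- by rewrite size_prefix; lia.
- by rewrite size_drop size_prefix; lia.
- move=> i ii; rewrite nth_prefix ?nth_drop_prefix; try lia.
  by apply: per_below_shift; try lia; rewrite -modnDml t0.
rewrite nth_prefix ?nth_drop_prefix ?subnKC; try lia.
suff -> : Y (N - t) = Y (N %% p) by [].
have : N %% p < p by rewrite ltn_pmod.
move=> r_lt_p; apply: per_below_shift; try lia.
by rewrite modn_mod modnB_mod0 //; lia.
Qed.

(* while the other suffixes are compared through a proper suffix of the
   Lyndon period. *)
Lemma bump_drop_unaligned t : lyndon (take p y) -> 0 < t <= N -> 0 < t %% p ->
  lex_lt z (drop t z).
Proof.
move=> lw t_in; set e := t %% p => e_gt0.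
have e_lt_p : e < p by rewrite ltn_pmod.
have e_le_t : e <= t by apply: leq_mod.
have per_t i : t + i < N -> Y (t + i) = Y (e + i).
  by move=> ti; apply: per_below_shift; try lia; rewrite /e modnDml.
have [dd [dd_lt same lt_dd]] := period_first_diff lw (ltac:(lia) : 0 < e < p).
case: (ltnP dd (N - t)) => dd_N.
  apply: (@first_diff_lt _ _ x0 _ _ dd); split.
  - by rewrite size_prefix; lia.
  - by rewrite size_drop size_prefix; lia.
  - by move=> i ii; rewrite nth_prefix ?nth_drop_prefix ?per_t ?(same i); try lia.
  - by rewrite nth_prefix ?nth_drop_prefix ?per_t; try lia.
have e_N : e + (N - t) = N %% p.
  rewrite -(@modn_small (e + (N - t)) p); last by lia.
  by rewrite addnC /e modnDmr subnK //; case/andP: t_in.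
apply: (@first_diff_lt _ _ x0 _ _ (N - t)); split.
- by rewrite size_prefix; lia.
- by rewrite size_drop size_prefix; lia.
- by move=> i ii; rewrite nth_prefix ?nth_drop_prefix ?per_t ?(same i); try lia.
rewrite nth_prefix ?nth_drop_prefix ?subnKC; try lia.
apply: le_lt_trans bump; rewrite -e_N.
case: (ltnP (N - t) dd) => [lt_dd'|ge_dd]; first by rewrite same.
by rewrite (_ : N - t = dd); [apply: ltW|lia].
Qed.

Lemma bump_lyndon : lyndon (take p y) -> lyndon z.
Proof.
move=> lw; split; first by rewrite neq0_size size_prefix.
move=> t; rewrite size_prefix => t_in.
case: (posnP (t %% p)) => [t0|t_gt0].
  by apply: bump_drop_aligned.
by apply: bump_drop_unaligned.
Qed.

End Bump.

Section Periodic.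
Hypothesis per_upto : forall x, x <= N -> Y x = Y (x %% p).
Hypothesis lw : lyndon (take p y).

Lemma per_upto_shift a b : a <= N -> b <= N -> a %% p = b %% p -> Y a = Y b.
Proof. by move=> aN bN ab; rewrite (per_upto aN) (per_upto bN) ab. Qed.

(* A suffix of y[0..N] containing a full period is bordered, hence not Lyndon. *)
Lemma periodic_suffix_long t : t + p <= N -> ~ lyndon (drop t z).
Proof.
move=> tp ls; have s_size : size (drop t z) = N.+1 - t by rewrite size_drop size_prefix.
have/negP[] := lyndon_unbordered ls (ltac:(rewrite s_size; lia) : 0 < p < size (drop t z)).
apply/eqP/(eq_from_nth (x0 := x0)); first by rewrite size_drop size_takel s_size //; lia.
move=> i; rewrite size_drop s_size => ii.
rewrite nth_drop nth_take; last by lia.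
rewrite !nth_drop_prefix; try lia.
by apply: per_upto_shift; try lia; rewrite addnCA modnDl.
Qed.

(* A suffix of y[0..N] starting strictly inside the last full period, before
   its end M, is larger than its own suffix y[M..N] = y[0..N mod p]. *)
Lemma periodic_suffix_short t : N < t + p -> t < N - N %% p -> ~ lyndon (drop t z).
Proof.
move=> tp; have r_lt_p : N %% p < p by rewrite ltn_pmod.
have := modn_le_subn p_gt0 p_le_N; move: (N %% p) r_lt_p (modn_subn_mod N p).
move=> r r_lt_p M0 r_le tM ls; set M := N - r in M0 tM.
have s_size : size (drop t z) = N.+1 - t by rewrite size_drop size_prefix.
set e := t - (M - p).
have per_t i : t + i <= N -> Y (t + i) = Y (e + i).
  move=> ti; apply: per_upto_shift; try lia.
  have -> : t + i = (e + i) + (M - p) by rewrite /e; lia.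
  by rewrite modnD_mod0 // modnB_mod0 ?modnn //; lia.
have [dd [dd_lt same lt_dd]] := period_first_diff lw (ltac:(rewrite /e; lia) : 0 < e < p).
have/negP[] := lyndon_drop_not_lt ls (ltac:(rewrite s_size; lia) : 0 < M - t < size (drop t z)).
set g := drop (M - t) (drop t z).
have g_size : size g = r.+1 by rewrite size_drop s_size /M; lia.
have nth_g i : i <= r -> nth x0 g i = Y i.
  move=> ir; rewrite nth_drop nth_drop_prefix; last by lia.
  apply: per_upto_shift; try lia.
  by rewrite (_ : t + (M - t + i) = i + M) ?modnD_mod0 //; lia.
case: (leqP dd r) => dd_r.
  apply: (@first_diff_lt _ _ x0 _ _ dd); split.
  - by rewrite g_size; lia.
  - by rewrite s_size; lia.
  - by move=> i ii; rewrite nth_g ?nth_drop_prefix ?per_t ?(same i); try lia.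
  - by rewrite nth_g ?nth_drop_prefix ?per_t; try lia.
have -> : g = take r.+1 (drop t z).
  apply: (eq_from_nth (x0 := x0)); first by rewrite g_size size_takel // s_size; lia.
  move=> i; rewrite g_size => ii.
  by rewrite nth_take // nth_g ?nth_drop_prefix ?per_t ?(same i); try lia.
rewrite -[in X in lex_lt _ X](cat_take_drop r.+1 (drop t z)).
by apply: lex_lt_prefix; rewrite neq0_size size_drop s_size; lia.
Qed.

Lemma periodic_longest_lyndon_suffix m :
  longest_lyndon_suffix (take (N %% p).+1 y) m -> longest_lyndon_suffix z m.
Proof.
move=> [m0 m_le lu u_max]; set r := N %% p in m_le lu u_max.
have r_lt_p : r < p by rewrite ltn_pmod.
have r_le : r <= N - p by apply: modn_le_subn.
have r_size : size (take r.+1 y) = r.+1 by rewrite size_takel //; lia.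
rewrite r_size in m_le lu u_max.
have last_period : drop (N - r) z = take r.+1 y.
  apply: (eq_from_nth (x0 := x0)); first by rewrite size_drop size_prefix r_size; lia.
  move=> i; rewrite size_drop size_prefix => ii.
  rewrite nth_drop_prefix ?nth_take; try lia.
  by apply: per_upto_shift; try lia; rewrite addnC modnD_mod0 // /r modn_subn_mod.
have same_suffix m' : m' <= r.+1 -> drop (N.+1 - m') z = drop (r.+1 - m') (take r.+1 y).
  by move=> m'_le; rewrite -last_period drop_drop; congr drop; lia.
split; rewrite ?size_prefix ?same_suffix //; try lia.
move=> m' /andP[mm' m'N]; case: (leqP m' r.+1) => m'_r.
  by rewrite same_suffix //; apply: u_max; rewrite mm'.
case: (leqP (N.+1 - m' + p) N) => long.
  exact: periodic_suffix_long.
by apply: periodic_suffix_short; lia.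
Qed.

End Periodic.
End PeriodicPrefix.

Section Factors.
Context {d : Order.disp_t} {T : orderType d}.
Variables (y : seq T).
Local Notation n := (size y).

Definition fac a b := drop a (take b y).

Lemma size_fac a b : b <= n -> size (fac a b) = b - a.
Proof. by move=> bn; rewrite size_drop size_takel. Qed.

Lemma fac_cat a b c : a <= b -> b <= c -> c <= n -> fac a b ++ fac b c = fac a c.
Proof.
move=> ab bc cn; rewrite /fac -[in RHS](cat_take_drop b (take c y)) take_takel //.
rewrite drop_cat size_takel; last by lia.
case: ltnP => // ba; have -> : a = b by lia.
by rewrite subnn drop0 drop_oversize // size_takel //; lia.
Qed.

Lemma take_fac a b m : a + m <= b -> b <= n -> take m (fac a b) = fac a (a + m).
Proof.
move=> amb bn; rewrite -(@fac_cat a (a + m) b); [|lia|lia|lia].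
rewrite take_cat size_fac; last by lia.
by rewrite addKn ltnn subnn take0 cats0.
Qed.

Lemma drop_fac a b m : drop m (fac a b) = fac (a + m) b.
Proof. by rewrite /fac drop_drop addnC. Qed.

Lemma fac_neq0 a b : a < b -> b <= n -> fac a b != [::].
Proof. by move=> ab bn; rewrite neq0_size size_fac //; lia. Qed.

Lemma fac1 x0 a : a < n -> fac a a.+1 = [:: nth x0 y a].
Proof.
move=> an; apply: (eq_from_nth (x0 := x0)); rewrite size_fac // subSnn //.
by move=> [|i] //= _; rewrite nth_drop nth_take ?addn0.
Qed.

Lemma is_llt_join a b c tu tv : a < b -> b < c -> c <= n -> lyndon (fac a b) ->
  (forall m', b - a < m' < size (fac a c) -> ~ lyndon (take m' (fac a c))) ->
  is_llt (fac a b) a tu -> is_llt (fac b c) b tv -> is_llt (fac a c) a (Node tu tv).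
Proof.
move=> ab bc cn lyn_u u_max llt_u llt_v.
have size_ac : size (fac a c) = c - a by rewrite size_fac.
have take_ac : take (b - a) (fac a c) = fac a b by rewrite take_fac ?subnKC //; lia.
apply: (llt_node (m := b - a)); rewrite ?size_ac ?take_ac ?drop_fac ?subnKC //; try lia.
by rewrite -size_ac.
Qed.

Definition lls_at k m := longest_lyndon_suffix (take k.+1 y) m.

Lemma lls_atP k m : k < n -> lls_at k m -> [/\ 0 < m, m <= k.+1,
  lyndon (fac (k.+1 - m) k.+1) & forall a, a < k.+1 - m -> ~ lyndon (fac a k.+1)].
Proof.
move=> kn [m0 mk lu u_max]; have sz : size (take k.+1 y) = k.+1 by rewrite size_takel.
rewrite sz in mk lu u_max; split => // a a_lt.
by have := u_max (k.+1 - a); rewrite (_ : k.+1 - (k.+1 - a) = a); [apply; lia|lia].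
Qed.

Definition no_lyndon_across J b :=
  forall a' e, a' < b -> b <= e -> e < J -> ~ lyndon (fac a' e.+1).

Section Merge.
Variables (J l L m : nat).
Hypotheses (J_lt_n : J < n) (lls_J : lls_at J L) (l_in : 0 < l < L)
  (lls_b : lls_at (J - l) m) (lyn_v : lyndon (fac (J.+1 - l) J.+1)).
Local Notation b := (J.+1 - l).
Local Notation a := (J.+1 - l - m).
Local Notation c := (J.+1 - L).

Lemma l_le_J : l <= J.
Proof. by have [_ LJ _ _] := lls_atP J_lt_n lls_J; lia. Qed.

Lemma lls_b_fac : [/\ 0 < m, m <= b, lyndon (fac a b) &
  forall a', a' < a -> ~ lyndon (fac a' b)].
Proof.
have l_J := l_le_J; rewrite (_ : J.+1 - l = (J - l).+1); last by lia.
by apply: lls_atP => //; lia.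
Qed.

Lemma merge_lt : lex_lt (fac a b) (fac b J.+1).
Proof.
have [L0 LJ lyn_c _] := lls_atP J_lt_n lls_J.
have [m0 mb lyn_u u_max] := lls_b_fac.
have cb_lt_v : lex_lt (fac c b) (fac b J.+1).
  apply: (@lex_lt_trans _ _ _ (fac c J.+1)).
    by rewrite -(@fac_cat c b J.+1) ?lex_lt_prefix ?fac_neq0; lia.
  have := @lyndon_lt_drop _ _ _ (b - c) lyn_c; rewrite drop_fac subnKC; last by lia.
  by apply; rewrite size_fac; lia.
case: (ltnP a c) => [ac|ca].
  apply: lex_lt_trans cb_lt_v.
  have := @lyndon_lt_drop _ _ _ (c - a) lyn_u; rewrite drop_fac subnKC; last by lia.
  by apply; rewrite size_fac; lia.
apply: lex_le_lt_trans cb_lt_v.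
have lls_cb : longest_lyndon_suffix (fac c b) m.
  split; rewrite ?size_fac ?drop_fac; try lia.
    by rewrite (_ : c + (b - c - m) = a) //; lia.
  by move=> m' m'_in; rewrite drop_fac; apply: u_max; lia.
have := longest_lyndon_suffix_le lls_cb; rewrite size_fac ?drop_fac; last by lia.
by rewrite (_ : c + (b - c - m) = a) //; lia.
Qed.

Lemma merge_lyndon : lyndon (fac a J.+1).
Proof.
have [_ mb lyn_u _] := lls_b_fac.
by rewrite -(@fac_cat a b J.+1); [apply: lyndon_cat merge_lt|lia|lia|lia].
Qed.

Lemma merge_bound : c <= a.
Proof.
have [_ _ _ c_max] := lls_atP J_lt_n lls_J.
by rewrite leqNgt; apply/negP => ac; apply: (c_max a ac merge_lyndon).
Qed.

Hypothesis no_across_b : no_lyndon_across J b.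

Lemma merge_longest m' : m < m' < size (fac a J.+1) -> ~ lyndon (take m' (fac a J.+1)).
Proof.
have [m0 mb _ _] := lls_b_fac; rewrite size_fac; last by lia.
move=> m'_in; rewrite take_fac; [|lia|lia].
by rewrite (_ : a + m' = (a + m' - 1).+1); [apply: no_across_b|]; lia.
Qed.

(* Lyndon factors straddling a but not b would overlap the Lyndon word
   y[a..b) and extend it to a Lyndon suffix of y[0..b) longer than m. *)
Lemma merge_no_across : no_lyndon_across J a.
Proof.
have [m0 mb lyn_u u_max] := lls_b_fac.
move=> a' e a'_lt a_le e_lt; case: (leqP b e) => [be|eb].
  by apply: no_across_b; lia.
case: (eqVneq e.+1 b) => [->|e_neq]; first by apply: u_max.
move=> lyn_e; apply: (u_max a' a'_lt).
have := @lyndon_overlap _ _ (fac a' a) (fac a e.+1) (fac e.+1 b).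
rewrite (@fac_cat a' a e.+1) ?(@fac_cat a e.+1 b) ?(@fac_cat a' a b); try lia.
by apply => //; apply: fac_neq0; lia.
Qed.

End Merge.
End Factors.

Inductive ptree (n : nat) (lf rg : nat -> nat) : nat -> btree -> Prop :=
| ptree_leaf i : i < n -> ptree n lf rg i (Leaf i)
| ptree_node q tl tr : n <= q -> lf q < q -> rg q < q ->
    ptree n lf rg (lf q) tl -> ptree n lf rg (rg q) tr -> ptree n lf rg q (Node tl tr).

Lemma ptree_decode n lf rg id t : ptree n lf rg id t ->
  forall f, id < n + f -> decode n lf rg f id = Some t.
Proof.
elim=> [i iN|q tl tr nq lq rq _ IHl _ IHr] [|f] id_lt //=; rewrite ?iN //; try lia.
by rewrite ltnNge nq /= IHl ?IHr //; lia.
Qed.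

Lemma ptree_frame n lf rg id t : ptree n lf rg id t -> forall F lf' rg', id < F ->
  (forall x, x < F -> lf' x = lf x) -> (forall x, x < F -> rg' x = rg x) ->
  ptree n lf' rg' id t.
Proof.
elim=> [i iN|q tl tr nq lq rq _ IHl _ IHr] F lf' rg' qF same_l same_r.
  exact: ptree_leaf.
have lq' := same_l q qF; have rq' := same_r q qF.
by apply: ptree_node; rewrite ?lq' ?rq' //; [apply: (IHl F)|apply: (IHr F)] => //; lia.
Qed.

(* The cost potential: peeling off the blocks of lengths ls k, ls (k - ls k),
   ... from position k backwards.  When ls records longest Lyndon suffixes,
   [nfactors ls k] is the number of factors of the Lyndon factorization of
   y[0..k]; each for-iteration adds one factor and each while-iteration
   merges two, which yields the linear bound on the cost. *)
Fixpoint nblocks (ls : nat -> nat) (fuel k : nat) : nat :=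
  if fuel is fuel'.+1 then
    (if k < ls k then 1 else (nblocks ls fuel' (k - ls k)).+1)
  else 0.

Definition nfactors ls k := nblocks ls k.+1 k.

Definition nfactors_before ls b := if b is b'.+1 then nfactors ls b' else 0.

Lemma nblocks_fuel ls f f' k : (forall x, x <= k -> 0 < ls x) -> k < f -> k < f' ->
  nblocks ls f k = nblocks ls f' k.
Proof.
elim: f f' k => [|f IH] [|f'] k ls_gt0 kf kf' //=; try lia.
case: ifP => // /negbT; rewrite -leqNgt => k_ge; congr S.
have ls_k := ls_gt0 k (leqnn k).
by apply: IH => [x xk||]; [apply: ls_gt0|lia|lia]; lia.
Qed.

Lemma nblocks_frame ls ls' f k : (forall x, x <= k -> ls x = ls' x) ->
  nblocks ls f k = nblocks ls' f k.
Proof.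
elim: f k => [|f IH] k same //=; rewrite (same k (leqnn k)).
by case: ifP => // _; congr S; apply: IH => x xk; apply: same; lia.
Qed.

Lemma nfactors_unfold ls k : (forall x, x <= k -> 0 < ls x) ->
  nfactors ls k = if k < ls k then 1 else (nfactors ls (k - ls k)).+1.
Proof.
move=> ls_gt0; rewrite {1}/nfactors /=; case: ifP => // /negbT; rewrite -leqNgt => k_ge.
have ls_k := ls_gt0 k (leqnn k); congr S.
by apply: nblocks_fuel => [x xk||]; [apply: ls_gt0|lia|lia]; lia.
Qed.

Lemma nfactors_before_step ls b : (forall x, x < b -> 0 < ls x) -> 0 < b -> ls b.-1 <= b ->
  nfactors_before ls b = (nfactors_before ls (b - ls b.-1)).+1.
Proof.
case: b => [|b] // ls_gt0 _ /= ls_b.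
rewrite nfactors_unfold; last by move=> x xb; apply: ls_gt0; lia.
have := ls_gt0 b (leqnn _); case: ifP => [ls_big|/negbT ls_small] ls_b0.
  by rewrite (_ : b.+1 - ls b = 0) //; lia.
by rewrite (_ : b.+1 - ls b = (b - ls b).+1) //; lia.
Qed.

(* The state field [root], not the fingraph function of the same name. *)
Local Notation root := Defs.root.

Definition merge_node (s : state) (j k : nat) : state :=
  let q := fresh s in
  State (lyns s) (upd (root s) j q) (per s) (ii s)
        (upd (lft s) q (root s k)) (upd (rgt s) q (root s j)) q.+1 (cost s).+1 (ok s).

Lemma wloop_unfold fuel j l k s : wloop fuel.+1 j l k s =
  if l < lyns s j then wloop fuel j (l + lyns s k) (k - lyns s k) (merge_node s j k) else s.
Proof. by []. Qed.

Section WhileLoop.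
Context {d : Order.disp_t} {T : orderType d}.
Variables (y : seq T).
Local Notation n := (size y).
Local Notation fac := (fac y).

Definition tree_at (s : state) k := root s k < fresh s /\ exists t,
  ptree n (lft s) (rgt s) (root s k) t /\
  is_llt (fac (k.+1 - lyns s k) k.+1) (k.+1 - lyns s k) t.

Lemma tree_at_frame s s' k : lyns s' k = lyns s k -> root s' k = root s k ->
  fresh s <= fresh s' -> (forall x, x < fresh s -> lft s' x = lft s x) ->
  (forall x, x < fresh s -> rgt s' x = rgt s x) -> tree_at s k -> tree_at s' k.
Proof.
move=> same_ls same_rt fresh_le same_l same_r [rt_lt [t [pt llt]]].
split; first by rewrite same_rt; lia.
by exists t; rewrite same_ls same_rt; split => //; apply: ptree_frame pt _ _ _ rt_lt same_l same_r.
Qed.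

Record loop_inv (s1 s : state) (J l : nat) : Prop := LoopInv {
  li_lyns : lyns s = lyns s1;
  li_per : per s = per s1;
  li_ii : ii s = ii s1;
  li_ok : ok s = true;
  li_fresh : fresh s1 <= fresh s;
  li_lft : forall x, x < fresh s1 -> lft s x = lft s1 x;
  li_rgt : forall x, x < fresh s1 -> rgt s x = rgt s1 x;
  li_root : forall k, k != J -> root s k = root s1 k;
  li_l : 0 < l <= lyns s1 J;
  li_lyn : lyndon (fac (J.+1 - l) J.+1);
  li_root_lt : root s J < fresh s;
  li_tree : exists t, ptree n (lft s) (rgt s) (root s J) t /\
                      is_llt (fac (J.+1 - l) J.+1) (J.+1 - l) t;
  li_across : no_lyndon_across y J (J.+1 - l);
  li_cost : cost s + nfactors_before (lyns s1) (J.+1 - l) =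
            cost s1 + nfactors_before (lyns s1) J }.

Variables (J : nat) (s1 : state).
Hypotheses (J_lt_n : J < n) (lls_s1 : forall k, k <= J -> lls_at y k (lyns s1 k))
  (trees_s1 : forall k, k < J -> tree_at s1 k) (n_le_fresh : n <= fresh s1).

Lemma merge_node_ptree s l tu tv : loop_inv s1 s J l -> l <= J ->
  ptree n (lft s1) (rgt s1) (root s1 (J - l)) tu -> root s1 (J - l) < fresh s1 ->
  ptree n (lft s) (rgt s) (root s J) tv ->
  let s' := merge_node s J (J - l) in ptree n (lft s') (rgt s') (root s' J) (Node tu tv).
Proof.
move=> li l_J pu rk pv; set q := fresh s; rewrite /= /upd eqxx.
have q_ge := li_fresh li; have rv := li_root_lt li; have [l0 _] := andP (li_l li).
have rk' : root s (J - l) = root s1 (J - l) by apply: (li_root li); lia.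
apply: ptree_node; rewrite ?eqxx ?rk'; try lia.
  apply: (ptree_frame pu (F := fresh s1)) => // x x_lt; rewrite ifN ?(li_lft li) ?(li_rgt li) //;
  by rewrite neq_ltn; apply/orP; left; lia.
by apply: (ptree_frame pv (F := q)) => // x x_lt; rewrite ifN // neq_ltn x_lt.
Qed.

Lemma merge_node_inv s l : loop_inv s1 s J l -> l < lyns s1 J ->
  loop_inv s1 (merge_node s J (J - l)) J (l + lyns s1 (J - l)).
Proof.
move=> li l_lt; have [l0 _] := andP (li_l li); have lls_J := lls_s1 (leqnn J).
have l_in : 0 < l < lyns s1 J by rewrite l0.
have l_J := l_le_J J_lt_n lls_J l_in.
set k := J - l; set m := lyns s1 k.
have lls_k : lls_at y k m by apply: lls_s1; lia.
have [m0 mb lyn_u _] := lls_b_fac J_lt_n lls_J l_in lls_k.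
have a_ge := merge_bound J_lt_n lls_J l_in lls_k (li_lyn li).
have [rk [tu [pu llt_u]]] := trees_s1 (ltac:(lia) : k < J).
have [tv [pv llt_v]] := li_tree li.
have eb : k.+1 = J.+1 - l by rewrite /k; lia.
rewrite -/m eb in llt_u lyn_u.
have ea : J.+1 - (l + m) = J.+1 - l - m by rewrite subnDA.
constructor; rewrite /= ?ea ?(li_lyns li) ?(li_per li) ?(li_ii li) ?(li_ok li) //.
- by have := li_fresh li; lia.
- move=> x x_lt; rewrite /upd ifN ?(li_lft li) // neq_ltn.
  by apply/orP; left; have := li_fresh li; lia.
- move=> x x_lt; rewrite /upd ifN ?(li_rgt li) // neq_ltn.
  by apply/orP; left; have := li_fresh li; lia.
- by move=> k' k'_neq; rewrite /upd ifN // (li_root li).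
- by rewrite -/m; lia.
- exact: merge_lyndon J_lt_n lls_J l_in lls_k (li_lyn li).
- by rewrite /upd eqxx.
- exists (Node tu tv); split; first exact: merge_node_ptree.
  apply: (is_llt_join (b := J.+1 - l)) => //; try lia.
  rewrite (_ : J.+1 - l - (J.+1 - l - m) = m); last by lia.
  exact: merge_longest J_lt_n lls_J l_in lls_k (li_across li).
- exact: merge_no_across J_lt_n lls_J l_in lls_k (li_across li).
rewrite -ea -(li_cost li) addSnnS; congr (_ + _).
have ek : (J.+1 - l).-1 = k by rewrite /k; lia.
rewrite (@nfactors_before_step _ (J.+1 - l)) ?ek; try lia.
- by rewrite subnDA.
- by move=> x x_lt; have [] := lls_s1 (ltac:(lia) : x <= J).
Qed.

Lemma wloop_inv fuel s l : loop_inv s1 s J l -> lyns s1 J - l < fuel ->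
  loop_inv s1 (wloop fuel J l (J - l) s) J (lyns s1 J).
Proof.
elim: fuel s l => [|f IH] s l li fuel_gt; first by lia.
rewrite wloop_unfold (li_lyns li); case: ifP => [l_lt|/negbT]; last first.
  by have := li_l li; rewrite -leqNgt => /andP[_ ? ?]; rewrite (_ : lyns s1 J = l) //; lia.
have li' := merge_node_inv li l_lt; have := li_l li' => /andP[_ lm_le].
have [m0 _ _ _] := lls_atP (ltac:(lia) : J - l < n) (lls_s1 (leq_subr l J)).
by rewrite -subnDA; apply: IH li' _; lia.
Qed.

End WhileLoop.

Definition open_pos (s : state) (j L p i : nat) : state :=
  State (upd (lyns s) j L) (upd (root s) j j) p i (lft s) (rgt s) (fresh s) (cost s).+1 (ok s).

Lemma for_body_unfold neq n s j : for_body neq n s j = wloop n.+1 j 1 j.-1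
  (if neq j (ii s) then open_pos s j j.+1 j.+1 0
   else open_pos s j (lyns s (ii s)) (per s) ((ii s).+1 %% per s)).
Proof. by rewrite /for_body; case: (neq j (ii s)). Qed.

Section ForLoop.
Context {d : Order.disp_t} {T : orderType d}.
Variables (y : seq T) (x0 : T).
Local Notation n := (size y).
Local Notation Y i := (nth x0 y i).

Record for_inv (j : nat) (s : state) : Prop := ForInv {
  fi_ok : ok s = true;
  fi_fresh : n <= fresh s;
  fi_lls : forall k, k <= j -> lls_at y k (lyns s k);
  fi_tree : forall k, k <= j -> tree_at y s k;
  fi_per_gt0 : 0 < per s;
  fi_per_le : per s <= j.+1;
  fi_ii : ii s = j.+1 %% per s;
  fi_periodic : forall x, x <= j -> Y x = Y (x %% per s);
  fi_per_lyndon : lyndon (take (per s) y);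
  fi_cost : cost s + nfactors (lyns s) j = 2 * j.+1 }.

Lemma for_inv0 : 0 < n -> for_inv 0 (init_state n).
Proof.
move=> n_gt0; have size1 : size (take 1 y) = 1 by rewrite size_takel.
constructor => //=; last exact: lyndon_size1.
all: move=> k; rewrite leqn0 => /eqP-> //.
- rewrite /lls_at /longest_lyndon_suffix size1 subnn drop0.
  by split => //; [apply: lyndon_size1|lia].
- split => //; exists (Leaf 0); split; first exact: ptree_leaf.
  by rewrite (fac1 x0) //; apply: llt_leaf.
Qed.

Section Step.
Variables (j : nat) (s : state) (L p i : nat).
Hypotheses (j_lt : j.+1 < n) (inv_j : for_inv j s) (lls_L : lls_at y j.+1 L).
Local Notation s1 := (open_pos s j.+1 L p i).

Lemma open_pos_lls k : k <= j.+1 -> lls_at y k (lyns s1 k).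
Proof. by move=> k_le; rewrite /= /upd; case: eqP => [->|k_neq] //; apply: (fi_lls inv_j); lia. Qed.

Lemma open_pos_tree k : k < j.+1 -> tree_at y s1 k.
Proof.
move=> k_lt; have k_neq : k != j.+1 by rewrite neq_ltn k_lt.
apply: (tree_at_frame (s := s)); rewrite /= ?/upd ?ifN //.
by apply: (fi_tree inv_j); lia.
Qed.

Lemma open_pos_loop_inv : loop_inv y s1 s1 j.+1 1.
Proof.
have [L_gt0 _ _ _] := lls_atP j_lt lls_L.
have fac_leaf : fac y (j.+2 - 1) j.+2 = [:: Y j.+1] by rewrite subSS subn0 (fac1 x0).
constructor; rewrite //= ?fac_leaf ?/upd ?eqxx ?(fi_ok inv_j) //.
- exact: lyndon_size1.
- by have := fi_fresh inv_j; lia.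
- by exists (Leaf j.+1); split; [apply: ptree_leaf|apply: llt_leaf].
- by move=> a' e; rewrite subSS subn0; lia.
Qed.

Hypotheses (p_gt0 : 0 < p) (p_le : p <= j.+2) (i_eq : i = j.+2 %% p)
  (periodic : forall x, x <= j.+1 -> Y x = Y (x %% p)) (lyn_p : lyndon (take p y)).

(* After the while-loop the invariant holds at j+1; the cost grows by one
   plus the number of merges, i.e. by two minus the change in factors. *)
Lemma for_inv_succ : for_inv j.+1 (wloop n.+1 j.+1 1 j s1).
Proof.
have [L_gt0 L_le _ _] := lls_atP j_lt lls_L.
have eL : lyns s1 j.+1 = L by rewrite /= /upd eqxx.
have := wloop_inv j_lt open_pos_lls open_pos_tree (fi_fresh inv_j) open_pos_loop_inv.
rewrite eL subSS subn0 => /(_ n.+1 ltac:(lia)); set s2 := wloop _ _ _ _ _ => li.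
have lls_s2 k : k <= j.+1 -> lls_at y k (lyns s2 k) by rewrite (li_lyns li); apply: open_pos_lls.
constructor; rewrite ?(li_ok li) ?(li_per li) ?(li_ii li) //.
- by have := li_fresh li; have := fi_fresh inv_j; rewrite /=; lia.
- move=> k k_le; case: (eqVneq k j.+1) => [->|k_neq].
    by split; [apply: (li_root_lt li)|rewrite (li_lyns li) eL; apply: (li_tree li)].
  apply: (tree_at_frame (s := s1)); rewrite ?(li_lyns li) ?(li_root li) //.
  + exact: li_fresh li.
  + exact: li_lft li.
  + exact: li_rgt li.
  + by apply: open_pos_tree; lia.
have := li_cost li; have := fi_cost inv_j.
have ls_gt0 x : x < j.+2 -> 0 < lyns s1 x.
  by move=> x_lt; have [] := open_pos_lls (ltac:(lia) : x <= j.+1).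
have -> : nfactors (lyns s) j = nfactors_before (lyns s1) j.+1.
  by apply: nblocks_frame => x x_le; rewrite /= /upd ifN // neq_ltn; apply/orP; left; lia.
by have := @nfactors_before_step (lyns s1) j.+2 ls_gt0 isT; rewrite eL /= (li_lyns li) => ->; lia.
Qed.

End Step.

Lemma for_inv_step j s : lyndon y -> j.+1 < n -> for_inv j s ->
  for_inv j.+1 (for_body (letter_neq y x0) n s j.+1).
Proof.
move=> ly j_lt inv_j; rewrite for_body_unfold.
have p_gt0 := fi_per_gt0 inv_j; have p_le := fi_per_le inv_j; have ii_eq := fi_ii inv_j.
have periodic := fi_periodic inv_j; have lyn_p := fi_per_lyndon inv_j.
have per_below x : x < j.+1 -> Y x = Y (x %% per s) by move=> x_lt; apply: periodic; lia.
rewrite /letter_neq; case: ifP => [neq_j|/negbT].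
  (* a mismatch: y[0..j+1] is Lyndon, a new period starts *)
  have neq_j' : Y j.+1 != Y (j.+1 %% per s) by rewrite -ii_eq.
  have bump := bump_gt p_gt0 p_le j_lt per_below ly neq_j'.
  have lyn_j := bump_lyndon p_gt0 p_le j_lt per_below bump lyn_p.
  have size_j : size (take j.+2 y) = j.+2 by rewrite size_takel.
  apply: for_inv_succ => //; [|by rewrite modnn|by move=> x x_le; rewrite modn_small].
  by rewrite /lls_at /longest_lyndon_suffix size_j subnn drop0; split => // m'; lia.
(* a match: the period extends and lyns[j+1] copies lyns[i] *)
rewrite negbK => /eqP same_j.
have per_upto x : x <= j.+1 -> Y x = Y (x %% per s).
  move=> x_le; case: (ltnP x j.+1) => [|x_ge]; first exact: per_below.
  by rewrite (_ : x = j.+1) ?same_j ?ii_eq //; lia.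
have i_lt : ii s < per s by rewrite ii_eq ltn_pmod.
apply: for_inv_succ => //; try lia.
- apply: (periodic_longest_lyndon_suffix p_gt0 p_le j_lt per_upto lyn_p).
  by rewrite -ii_eq; apply: (fi_lls inv_j); lia.
- by rewrite ii_eq -addn1 modnDml addn1.
Qed.

Lemma for_inv_prefix j : lyndon y -> j < n ->
  for_inv j (foldl (for_body (letter_neq y x0) n) (init_state n) (iota 1 j)).
Proof.
move=> ly; elim: j => [|j IH] j_lt; first by apply: for_inv0; lia.
rewrite -addn1 iotaD foldl_cat /= add1n addn1.
by apply: for_inv_step => //; apply: IH; lia.
Qed.

End ForLoop.

Theorem proposition4 :
  exists c : nat,
  forall (d : Order.disp_t) (T : orderType d) (y : seq T) (x0 : T),
    lyndon y ->
    (exists t, llt_output (letter_neq y x0) (size y) = Some t /\ is_llt y 0 t) /\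
    cost (run_llt (letter_neq y x0) (size y)) <= c * size y.
Proof.
exists 2 => d T y x0 ly.
have n_gt0 : 0 < size y by rewrite -neq0_size; apply: lyndon_neq0.
have last_n : (size y).-1.+1 = size y by lia.
have inv_n := for_inv_prefix x0 ly (ltac:(lia) : (size y).-1 < size y).
rewrite /llt_output /run_llt; set s := foldl _ _ _ in inv_n *.
split; last by have := fi_cost inv_n; rewrite last_n; lia.
(* the longest Lyndon suffix of the Lyndon word y is y itself *)
have [L_gt0 L_le _ L_max] := lls_atP (ltac:(lia) : (size y).-1 < size y) (fi_lls inv_n (leqnn _)).
rewrite last_n in L_le L_max.
have lyns_n : lyns s (size y).-1 = size y.
  apply/eqP; rewrite eqn_leq L_le leqNgt; apply/negP => L_lt.
  by apply: (L_max 0); [lia|rewrite /fac drop0 take_size].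
have [root_lt [t [pt llt]]] := fi_tree inv_n (leqnn _).
rewrite (fi_ok inv_n); exists t; split; first by apply: ptree_decode pt _ _; lia.
by move: llt; rewrite lyns_n last_n subnn /fac drop0 take_size.
Qed.
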